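(* Under the standing setup below (in particular, with $\mathcal C\subseteq\mathcal C_G$ a closed convex cone and $\mathcal S\subseteq\mathcal S_G$ a closed convex set satisfying $\overline{\mathcal T}=\{\Phi\in\mathcal C:\sum_{m}\Phi_m\in\mathcal S\}$), the optimal value of Problem (P) coincides with the optimal value of Problem (D), i.e. $$\sup_{\Phi\in\mathsf P}P(\Phi)=\inf_{(\chi,q)\in\mathsf D}D_{\mathcal S}(\chi,q).$$
   Context: Standing setup. All Hilbert spaces are finite-dimensional complex. Fix an integer $T\ge1$ and systems $\mathcal V_1,\dots,\mathcal V_T,\mathcal W_1,\dots,\mathcal W_T$; set $\mathcal W_0:=\mathbb C$ and $\tilde{\mathcal V}:=\mathcal W_T\otimes\mathcal V_T\otimes\cdots\otimes\mathcal W_1\otimes\mathcal V_1$. For a system $\mathcal X$, $N_{\mathcal X}$ is its dimension, $I_{\mathcal X}$ its identity, $\mathrm{Her}_{\mathcal X}$ the real Hilbert space of Hermitian operators on $\mathcal X$ with inner product $\langle X,Y\rangle=\mathrm{Tr}(XY)$, and $\mathrm{Pos}_{\mathcal X}$ the set of positive semidefinite operators; $X\ge Y$ means $X-Y$ is positive semidefinite; $\mathrm{Tr}_{\mathcal X}$ is the partial trace over $\mathcal X$. For a subset $A$ of a real vector space, $\mathrm{Lin}(A)$ is its real linear span and $\overline A$ its closure. $\mathcal I_n:=\{0,\dots,n-1\}$. Combs: $\mathrm{Chn}_{\tilde{\mathcal V}}$ is the set of $c\in\mathrm{Pos}_{\tilde{\mathcal V}}$ for which there exist $c_t\in\mathrm{Pos}_{\mathcal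 W_t\otimes\mathcal V_t\otimes\cdots\otimes\mathcal W_1\otimes\mathcal V_1}$ ($t=1,\dots,T$) with $c_T=c$, $\mathrm{Tr}_{\mathcal W_t}c_t=I_{\mathcal V_t}\otimes c_{t-1}$ for $2\le t\le T$, and $\mathrm{Tr}_{\mathcal W_1}c_1=I_{\mathcal V_1}$. $\mathcal S_G$ is the set of operators $I_{\mathcal W_T}\otimes\tau_T$ where $\tau_t\in\mathrm{Pos}_{\mathcal V_t\otimes\mathcal W_{t-1}\otimes\mathcal V_{t-1}\otimes\cdots\otimes\mathcal W_1\otimes\mathcal V_1}$ ($t=1,\dots,T$) satisfy $\mathrm{Tr}\,\tau_1=1$ and $\mathrm{Tr}_{\mathcal V_t}\tau_t=I_{\mathcal W_{t-1}}\otimes\tau_{t-1}$ for $2\le t\le T$. Fix an integer $M\ge2$; $\mathcal C_G:=\mathrm{Pos}_{\tilde{\mathcal V}}^M$ and the set of (all) testers is $\mathcal T_G:=\{\Phi=\{\Phi_m\}_{m=0}^{M-1}\in\mathcal C_G:\sum_m\Phi_m\in\mathcal S_G\}$. Problem data: an integer $J\ge0$, $c_m,a_{j,m}\in\mathrm{Her}_{\tilde{\mathcal V}}$ and $b_j\in\mathbb R$ ($m\in\mathcal I_M$, $j\in\mathcal I_J$); $\eta_j(\Phi):=\sum_m\langle\Phi_m,a_{j,m}\rangle-b_j$ and $P(\Phi):=\sum_m\langle\Phi_m,c_m\rangle$. $\mathcal T$ is a nonempty convex subset of $\mathcal T_G$, $\mathsf P:=\{\Phi\in\mathcal T:\eta_j(\Phi)\le0\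 \forall j\in\mathcal I_J\}$, and it is assumed that $\overline{\mathsf P}=\{\Phi\in\overline{\mathcal T}:\eta_j(\Phi)\le0\ \forall j\}$. $\mathcal C\subseteq\mathcal C_G$ is a closed convex cone and $\mathcal S\subseteq\mathcal S_G$ a closed convex set with $\overline{\mathcal T}=\{\Phi\in\mathcal C:\sum_m\Phi_m\in\mathcal S\}$. Problem (P): maximize $P(\Phi)$ subject to $\Phi\in\mathsf P$; its optimal value is $\sup_{\Phi\in\mathsf P}P(\Phi)$ ($-\infty$ if $\mathsf P=\emptyset$); an optimal solution is a $\Phi\in\mathsf P$ attaining it. Dual: $\mathcal C^*:=\{\{y_m\}_{m}\in\mathrm{Her}_{\tilde{\mathcal V}}^M:\sum_m\langle\Phi_m,y_m\rangle\ge0\ \forall\Phi\in\mathcal C\}$; $\lambda_{\mathcal S}(\chi):=\sup_{\varphi\in\mathcal S}\langle\varphi,\chi\rangle$; $z_m(q):=c_m-\sum_jq_ja_{j,m}$ for $q=\{q_j\}\in\mathbb R_+^J$; $\mathsf D:=\{(\chi,q)\in\mathrm{Her}_{\tilde{\mathcal V}}\times\mathbb R_+^J:\{\chi-z_m(q)\}_{m}\in\mathcal C^*\}$; $D_{\mathcal S}(\chi,q):=\lambda_{\mathcal S}(\chi)+\sum_jq_jb_j$. Problem (D): minimize $D_{\mathcal S}(\chi,q)$ over $(\chi,q)\in\mathsf D$; its optimal value is the infimum ($+\infty$ if $\mathsf D=\emptyset$); an optimal solution attains it. *)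

From HB Require Import structures.
From mathcomp Require Import all_boot all_order all_algebra.
From mathcomp Require Import all_classical all_reals ereal.
From mathcomp.real_closed Require Import complex mxtens.
Set Implicit Arguments. Unset Strict Implicit. Unset Printing Implicit Defensive.
Import Order.TTheory GRing.Theory Num.Theory.
Local Open Scope ring_scope.
Local Open Scope classical_set_scope.
Local Open Scope complex_scope.
Local Open Scope ring_scope.

Section QuantumDefs.
Variable R : realType.
Local Notation C := (R[i]).

Definition adjmx m n (A : 'M[C]_(m, n)) : 'M[C]_(n, m) := (map_mx Num.conj A)^T.

Definition herm_op n (A : 'M[C]_n) : Prop := adjmx A = A.

Definition psd_op n (A : 'M[C]_n) : Prop :=
  herm_op A /\ forall v : 'cV[C]_n, 0 <= (adjmx v *m A *m v) 0 0.

(* Hilbert-Schmidt inner product <X,Y> = Tr(XY) (real for Hermitian X, Y) *)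
Definition hs_ip n (X Y : 'M[C]_n) : R := complex.Re (\tr (X *m Y)).

(* partial trace over the FIRST tensor factor of X (x) Y, where the
   Kronecker product is mxtens's  A *t B  (index (i,j) |-> i * n + j) *)
Definition ptr1 m n (A : 'M[C]_(m * n)) : 'M[C]_n :=
  \matrix_(i < n, j < n) \sum_(k < m) A (mxtens_index (k, i)) (mxtens_index (k, j)).

(* dimension of W_t (x) V_t (x) ... (x) W_1 (x) V_1 (dimPre 0 = 1, i.e. C) *)
Fixpoint dimPre (nV nW : nat -> nat) (t : nat) : nat :=
  if t is s.+1 then (nW s.+1 * (nV s.+1 * dimPre nV nW s))%N else 1%N.

(* S_G for T = Tp.+1 :  tau t  stands for tau_{t+1}, an operator on
   V_{t+1} (x) W_t (x) V_t (x) ... (x) W_1 (x) V_1 *)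
Definition in_SG (nV nW : nat -> nat) (Tp : nat)
    (X : 'M[C]_(dimPre nV nW Tp.+1)) : Prop :=
  exists tau : forall t : nat, 'M[C]_(nV t.+1 * dimPre nV nW t),
    (forall t, (t <= Tp)%N -> psd_op (tau t)) /\
    \tr (tau 0%N) = 1 /\
    (forall t, (t.+1 <= Tp)%N ->
       ptr1 (tau t.+1) = (1%:M : 'M[C]_(nW t.+1)) *t tau t) /\
    X = (1%:M : 'M[C]_(nW Tp.+1)) *t tau Tp.

Definition in_CG M N (Phi : 'I_M -> 'M[C]_N) : Prop := forall m, psd_op (Phi m).

Definition in_TG (nV nW : nat -> nat) (Tp M : nat)
    (Phi : 'I_M -> 'M[C]_(dimPre nV nW Tp.+1)) : Prop :=
  in_CG Phi /\ @in_SG nV nW Tp (\sum_(m < M) Phi m).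

(* topological closure (entrywise = norm topology in finite dimension) *)
Definition mx_closure N (A : set 'M[C]_N) : set 'M[C]_N :=
  [set X | forall e : R, 0 < e ->
     exists2 Y, A Y & forall i j, `|X i j - Y i j| < e%:C].

Definition tup_closure M N (A : set ('I_M -> 'M[C]_N)) : set ('I_M -> 'M[C]_N) :=
  [set Phi | forall e : R, 0 < e ->
     exists2 Psi, A Psi & forall m i j, `|Phi m i j - Psi m i j| < e%:C].

Definition mx_closed N (A : set 'M[C]_N) : Prop := mx_closure A `<=` A.
Definition tup_closed M N (A : set ('I_M -> 'M[C]_N)) : Prop := tup_closure A `<=` A.

Definition mx_convex N (A : set 'M[C]_N) : Prop :=
  forall X Y (l : R), A X -> A Y -> 0 <= l -> l <= 1 ->
    A (l%:C *: X + (1 - l)%:C *: Y).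

Definition tup_convex M N (A : set ('I_M -> 'M[C]_N)) : Prop :=
  forall X Y (l : R), A X -> A Y -> 0 <= l -> l <= 1 ->
    A (fun m => l%:C *: X m + (1 - l)%:C *: Y m).

Definition tup_cone M N (A : set ('I_M -> 'M[C]_N)) : Prop :=
  forall X (l : R), A X -> 0 <= l -> A (fun m => l%:C *: X m).

Definition dual_cone M N (K : set ('I_M -> 'M[C]_N)) : set ('I_M -> 'M[C]_N) :=
  [set y | (forall m, herm_op (y m)) /\
           forall Phi, K Phi -> 0 <= \sum_(m < M) hs_ip (Phi m) (y m)].

Definition support_fun N (S : set 'M[C]_N) (chi : 'M[C]_N) : \bar R :=
  ereal_sup [set (hs_ip phi chi)%:E | phi in S].

End QuantumDefs.
Arguments in_SG {R} nV nW Tp X.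
Arguments in_TG {R} nV nW Tp M Phi.

From HB Require Import structures.
From mathcomp Require Import all_boot all_order all_algebra.
From mathcomp Require Import all_classical all_reals ereal.
From mathcomp.real_closed Require Import complex mxtens.
From mathcomp Require Import topology normedtype derive.
From mathcomp Require Import ring lra.
Import Order.TTheory GRing.Theory Num.Theory.
Import numFieldNormedType.Exports.
Set Implicit Arguments. Unset Strict Implicit. Unset Printing Implicit Defensive.
Local Open Scope classical_set_scope.
Local Open Scope complex_scope.
Local Open Scope ring_scope.

(* Weak duality, sup P <= inf D, is the Lagrangian computation
   P(Phi) <= <sum_m Phi_m, chi> + sum_j q_j b_j <= D_S(chi, q).

   For the converse we show that every real v strictly above the value of
   (P) over its closure {Phi in C : sum Phi in S, eta(Phi) <= 0} bounds the
   dual value.  Encode the tuples (Phi, phi, w, t) with Phi in C, phi in S,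
   eta_j(Phi) <= w_j and t <= P(Phi) as a closed convex set Q of real
   coordinate vectors, and let G(Phi, phi, w, t) = (phi - sum Phi, w, t).
   Since S is bounded and C consists of PSD tuples, |G z - (0, 0, v)|^2 is
   coercive on Q and attains its minimum; it is positive there, and the
   first-order condition at the minimiser is a hyperplane (D, w, beta)
   separating G(Q) from (0, 0, v).  If beta > 0, rescaling it gives a dual
   point of value <= v; if beta = 0, it is a recession direction of the dual
   along which we move from the dual point (lam I, 0).  Finally the closure
   hypothesis on the feasible set of (P) transfers the bound to sup P. *)

Section ComplexParts.
Variable R : realType.
Local Notation C := R[i].
Local Notation RE := (@complex.Re R).
Local Notation IM := (@complex.Im R).

Lemma Re_mul (x y : C) : RE (x * y) = RE x * RE y - IM x * IM y.
Proof. by case: x => a b; case: y => c d. Qed.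
Lemma Re_add (x y : C) : RE (x + y) = RE x + RE y.
Proof. by case: x => a b; case: y => c d. Qed.
Lemma Im_add (x y : C) : IM (x + y) = IM x + IM y.
Proof. by case: x => a b; case: y => c d. Qed.
Lemma Re_opp (x : C) : RE (- x) = - RE x.
Proof. by case: x. Qed.
Lemma Im_opp (x : C) : IM (- x) = - IM x.
Proof. by case: x. Qed.
Lemma Re_sub (x y : C) : RE (x - y) = RE x - RE y.
Proof. by rewrite Re_add Re_opp. Qed.
Lemma Re_sum (I : Type) (r : seq I) (P : pred I) (F : I -> C) :
  RE (\sum_(i <- r | P i) F i) = \sum_(i <- r | P i) RE (F i).
Proof. exact: (big_morph _ (@Re_add) (erefl _)). Qed.
Lemma Im_sum (I : Type) (r : seq I) (P : pred I) (F : I -> C) :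
  IM (\sum_(i <- r | P i) F i) = \sum_(i <- r | P i) IM (F i).
Proof. exact: (big_morph _ (@Im_add) (erefl _)). Qed.
Lemma Re_realM (k : R) (x : C) : RE (k%:C * x) = k * RE x.
Proof. by case: x => a b /=; rewrite mul0r subr0. Qed.
Lemma Re_conjc (x : C) : RE (conjc x) = RE x.
Proof. by case: x. Qed.
Lemma Im_conjc (x : C) : IM (conjc x) = - IM x.
Proof. by case: x. Qed.
Lemma conjcM (x y : C) : conjc (x * y) = conjc x * conjc y.
Proof. by case: x => a b; case: y => c d /=; congr (_ +i* _); ring. Qed.
Lemma ReIm_eta (x : C) : RE x +i* IM x = x.
Proof. by case: x. Qed.
Lemma lec0E (z : C) : (0 <= z) = (IM z == 0) && (0 <= RE z).
Proof. by case: z => a b; rewrite lecE /= eq_sym. Qed.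

Lemma cnorm_lt (w : C) (e : R) : 0 < e -> `|RE w| < e / 2 -> `|IM w| < e / 2 ->
  `|w| < e%:C.
Proof.
move=> e0 h1 h2; rewrite normc_def ltcR.
rewrite -[X in _ < X]ger0_norm ?ltW // -sqrtr_sqr ltr_sqrt ?exprn_gt0 //.
by move: h1 h2; rewrite !ltr_norml => /andP[h1 h1'] /andP[h2 h2']; nra.
Qed.

Lemma cnorm_lt_inv (w : C) (e : R) : `|w| < e%:C -> `|RE w| < e /\ `|IM w| < e.
Proof.
rewrite normc_def ltcR => h; split; apply: le_lt_trans h;
  rewrite -sqrtr_sqr ler_sqrt ?addr_ge0 ?sqr_ge0 //.
  by rewrite lerDl sqr_ge0.
by rewrite lerDr sqr_ge0.
Qed.
End ComplexParts.

Section Hermitian.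
Variable R : realType.
Local Notation C := R[i].

Lemma adjmxE m n (A : 'M[C]_(m, n)) i j : adjmx A i j = conjc (A j i).
Proof. by rewrite !mxE. Qed.

Lemma herm_entry n (A : 'M[C]_n) i j : herm_op A -> A j i = conjc (A i j).
Proof. by move=> hA; rewrite -[in LHS]hA adjmxE. Qed.

Lemma adjmxD m n (A B : 'M[C]_(m, n)) : adjmx (A + B) = adjmx A + adjmx B.
Proof. by apply/matrixP => i j; rewrite !mxE rmorphD. Qed.
Lemma adjmxN m n (A : 'M[C]_(m, n)) : adjmx (- A) = - adjmx A.
Proof. by apply/matrixP => i j; rewrite !mxE rmorphN. Qed.
Lemma adjmxZ m n (u : C) (A : 'M[C]_(m, n)) : adjmx (u *: A) = conjc u *: adjmx A.
Proof. by apply/matrixP => i j; rewrite !mxE rmorphM. Qed.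
Lemma adjmx_sum m n (I : finType) (F : I -> 'M[C]_(m, n)) :
  adjmx (\sum_i F i) = \sum_i adjmx (F i).
Proof.
by apply/matrixP => i j; rewrite !mxE !summxE rmorph_sum; apply: eq_bigr => k _; rewrite !mxE.
Qed.

Lemma hermD n (X Y : 'M[C]_n) : herm_op X -> herm_op Y -> herm_op (X + Y).
Proof. by rewrite /herm_op adjmxD => -> ->. Qed.
Lemma hermB n (X Y : 'M[C]_n) : herm_op X -> herm_op Y -> herm_op (X - Y).
Proof. by rewrite /herm_op adjmxD adjmxN => -> ->. Qed.
Lemma herm_sum n (I : finType) (F : I -> 'M[C]_n) :
  (forall i, herm_op (F i)) -> herm_op (\sum_i F i).
Proof. by move=> h; rewrite /herm_op adjmx_sum; apply: eq_bigr => i _; exact: h. Qed.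
Lemma hermZ n (r : R) (X : 'M[C]_n) : herm_op X -> herm_op (r%:C *: X).
Proof. by rewrite /herm_op adjmxZ conjc_real => ->. Qed.
Lemma herm_scalar n (r : R) : herm_op ((r%:C)%:M : 'M[C]_n).
Proof.
apply/matrixP => i j; rewrite adjmxE !mxE eq_sym.
by case: (i == j); rewrite ?mulr1n ?mulr0n ?conjc_real ?conjc0.
Qed.
End Hermitian.

(* Entries of a positive semidefinite operator are controlled by its diagonal:
   testing the quadratic form on e_i + u e_j with |u| = 1. *)
Section PSD.
Variable R : realType.
Local Notation C := R[i].
Local Notation RE := (@complex.Re R).
Local Notation IM := (@complex.Im R).

Definition basis_vec n (i : 'I_n) : 'cV[C]_n := delta_mx i 0.

Lemma quad_basis n (A : 'M[C]_n) i j :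
  (adjmx (basis_vec i) *m A *m basis_vec j) 0 0 = A i j.
Proof.
have -> : adjmx (basis_vec i) = delta_mx 0 i.
  apply/matrixP => a b; rewrite !mxE.
  by case: (b == i); case: (a == 0) => /=; rewrite ?rmorph0 ?rmorph1.
by rewrite -rowE -colE !mxE.
Qed.

Lemma quad_basis2 n (A : 'M[C]_n) i j (u : C) :
  let v := basis_vec i + u *: basis_vec j in
  (adjmx v *m A *m v) 0 0 =
  A i i + u * A i j + conjc u * A j i + conjc u * u * A j j.
Proof.
have addE (X Y : 'M[C]_1) : (X + Y) 0 0 = X 0 0 + Y 0 0 by rewrite mxE.
have sclE (a : C) (X : 'M[C]_1) : (a *: X) 0 0 = a * X 0 0 by rewrite mxE.
rewrite /= adjmxD adjmxZ !mulmxDl !mulmxDr -!scalemxAl -!scalemxAr !addE !sclE.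
by rewrite !quad_basis mulrA !addrA.
Qed.

Lemma psd_diag n (A : 'M[C]_n) i : psd_op A -> 0 <= RE (A i i) /\ IM (A i i) = 0.
Proof.
by move=> [_ hP]; have := hP (basis_vec i); rewrite quad_basis lec0E => /andP[/eqP -> ->].
Qed.

Lemma psd_quad n (A : 'M[C]_n) i j (u : C) : psd_op A -> conjc u * u = 1 ->
  0 <= RE (A i i) + RE (A j j) + 2 * RE (u * A i j).
Proof.
move=> [hH hP] hu; have := hP (basis_vec i + u *: basis_vec j).
rewrite quad_basis2 hu mul1r (herm_entry i j hH) lec0E => /andP[_].
rewrite !Re_add -conjcM Re_conjc => h; apply: le_trans h _.
by rewrite mulr2n mulrDl mul1r le_eqVlt; apply/orP; left; apply/eqP; ring.
Qed.
Lemma psd_off n (A : 'M[C]_n) i j : psd_op A ->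
  `|RE (A i j)| <= (RE (A i i) + RE (A j j)) / 2 /\
  `|IM (A i j)| <= (RE (A i i) + RE (A j j)) / 2.
Proof.
move=> hA.
have unit (a b : R) : a ^+ 2 + b ^+ 2 = 1 -> conjc (a +i* b) * (a +i* b) = 1.
  move=> hab; apply/eqP; rewrite eq_complex /=; apply/andP; split; apply/eqP.
    by rewrite -hab; ring.
  by ring.
have e1 : conjc (1 : C) * 1 = 1 by apply: unit; ring.
have e2 : conjc (-1 : C) * (-1) = 1 by apply: unit; ring.
have e3 : conjc ('i : C) * 'i = 1 by apply: unit; ring.
have e4 : conjc (-'i : C) * (-'i) = 1 by apply: unit; ring.
have h1 := psd_quad i j hA e1; have h2 := psd_quad i j hA e2.
have h3 := psd_quad i j hA e3; have h4 := psd_quad i j hA e4.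
move: h1 h2 h3 h4; case: (A i j) => a b /=.
by rewrite !ler_norml => h1 h2 h3 h4; split; apply/andP; split; lra.
Qed.

Lemma psd_entry_bound n (A : 'M[C]_n) (B : R) : psd_op A ->
  (forall k, RE (A k k) <= B) ->
  forall i j, `|RE (A i j)| <= B /\ `|IM (A i j)| <= B.
Proof.
move=> hA hd i j; have [h1 h2] := psd_off i j hA.
have hi := hd i; have hj := hd j.
by split; [apply: le_trans h1 _|apply: le_trans h2 _]; rewrite ler_pdivrMr //; lra.
Qed.

Lemma psd_trace_ge0 n (A : 'M[C]_n) : psd_op A -> 0 <= RE (\tr A).
Proof.
by move=> hA; rewrite /mxtrace Re_sum; apply: sumr_ge0 => i _; case: (psd_diag i hA).
Qed.

Lemma psd_trace_bound n (A : 'M[C]_n) : psd_op A -> forall i j,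
  `|RE (A i j)| <= RE (\tr A) /\ `|IM (A i j)| <= RE (\tr A).
Proof.
move=> hA; apply: psd_entry_bound => // k.
rewrite /mxtrace Re_sum (bigD1 k) //= lerDl.
by apply: sumr_ge0 => l _; case: (psd_diag l hA).
Qed.

Lemma psd_tuple_bound M n (Phi : 'I_M -> 'M[C]_n) (B : R) :
  (forall m, psd_op (Phi m)) -> (forall k, RE ((\sum_m Phi m) k k) <= B) ->
  forall m i j, `|RE (Phi m i j)| <= B /\ `|IM (Phi m i j)| <= B.
Proof.
move=> hP hB m; apply: psd_entry_bound => // k.
apply: le_trans (hB k); rewrite summxE Re_sum (bigD1 m) //= lerDl.
by apply: sumr_ge0 => l _; case: (psd_diag k (hP l)).
Qed.
End PSD.

Section HilbertSchmidt.
Variable R : realType.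
Local Notation C := R[i].
Local Notation RE := (@complex.Re R).
Local Notation IM := (@complex.Im R).

Lemma hs_ipE n (X Y : 'M[C]_n) :
  hs_ip X Y = \sum_i \sum_k (RE (X i k) * RE (Y k i) - IM (X i k) * IM (Y k i)).
Proof.
rewrite /hs_ip /mxtrace Re_sum; apply: eq_bigr => i _.
by rewrite mxE Re_sum; apply: eq_bigr => k _; rewrite Re_mul.
Qed.

Lemma hs_ip_herm n (X Y : 'M[C]_n) : herm_op Y ->
  hs_ip X Y = \sum_i \sum_k (RE (X i k) * RE (Y i k) + IM (X i k) * IM (Y i k)).
Proof.
move=> hY; rewrite hs_ipE; apply: eq_bigr => i _; apply: eq_bigr => k _.
by rewrite (herm_entry i k hY) Re_conjc Im_conjc mulrN opprK.
Qed.

Lemma hs_ipDl n (X Y Z : 'M[C]_n) : hs_ip (X + Y) Z = hs_ip X Z + hs_ip Y Z.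
Proof. by rewrite /hs_ip mulmxDl mxtraceD Re_add. Qed.
Lemma hs_ipDr n (X Y Z : 'M[C]_n) : hs_ip X (Y + Z) = hs_ip X Y + hs_ip X Z.
Proof. by rewrite /hs_ip mulmxDr mxtraceD Re_add. Qed.
Lemma hs_ipBl n (X Y Z : 'M[C]_n) : hs_ip (X - Y) Z = hs_ip X Z - hs_ip Y Z.
Proof. by rewrite hs_ipDl /hs_ip mulNmx (raddfN (@mxtrace _ _)) Re_opp. Qed.
Lemma hs_ipBr n (X Y Z : 'M[C]_n) : hs_ip X (Y - Z) = hs_ip X Y - hs_ip X Z.
Proof. by rewrite hs_ipDr /hs_ip mulmxN (raddfN (@mxtrace _ _)) Re_opp. Qed.
Lemma hs_ipZl n (a : R) (X Z : 'M[C]_n) : hs_ip (a%:C *: X) Z = a * hs_ip X Z.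
Proof. by rewrite /hs_ip -scalemxAl mxtraceZ Re_realM. Qed.
Lemma hs_ipZr n (a : R) (X Z : 'M[C]_n) : hs_ip X (a%:C *: Z) = a * hs_ip X Z.
Proof. by rewrite /hs_ip -scalemxAr mxtraceZ Re_realM. Qed.
Lemma hs_ip0r n (Z : 'M[C]_n) : hs_ip Z 0 = 0.
Proof. by rewrite /hs_ip mulmx0 mxtrace0. Qed.
Lemma hs_ip_suml n (I : Type) (r : seq I) (P : pred I) (F : I -> 'M[C]_n) Z :
  hs_ip (\sum_(i <- r | P i) F i) Z = \sum_(i <- r | P i) hs_ip (F i) Z.
Proof.
elim/big_rec2: _ => [|i y x _ <-]; last by rewrite hs_ipDl.
by rewrite /hs_ip mul0mx mxtrace0.
Qed.
Lemma hs_ip_sumr n (I : Type) (r : seq I) (P : pred I) (F : I -> 'M[C]_n) Z :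
  hs_ip Z (\sum_(i <- r | P i) F i) = \sum_(i <- r | P i) hs_ip Z (F i).
Proof.
by elim/big_rec2: _ => [|i y x _ <-]; [exact: hs_ip0r|rewrite hs_ipDr].
Qed.
Lemma hs_ip_scalar n (X : 'M[C]_n) (a : R) : hs_ip X (a%:C)%:M = a * RE (\tr X).
Proof. by rewrite /hs_ip mul_mx_scalar mxtraceZ Re_realM. Qed.

Definition l1norm n (Y : 'M[C]_n) : R :=
  \sum_i \sum_k (`|RE (Y i k)| + `|IM (Y i k)|).

Lemma l1norm_ge0 n (Y : 'M[C]_n) : 0 <= l1norm Y.
Proof. by apply: sumr_ge0 => i _; apply: sumr_ge0 => k _; rewrite addr_ge0. Qed.

Lemma hs_bound n (X Y : 'M[C]_n) (B : R) :
  (forall i k, `|RE (X i k)| <= B /\ `|IM (X i k)| <= B) ->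
  `|hs_ip X Y| <= B * l1norm Y.
Proof.
move=> hX; rewrite hs_ipE /l1norm (exchange_big _ _ _ _ _ (fun i k => _ + _)).
rewrite mulr_sumr; apply: le_trans (ler_norm_sum _ _ _) _.
apply: ler_sum => i _; rewrite mulr_sumr; apply: le_trans (ler_norm_sum _ _ _) _.
apply: ler_sum => k _; have [h1 h2] := hX k i.
apply: le_trans (ler_normB _ _) _; rewrite !normrM mulrDr.
by apply: lerD; apply: ler_wpM2r.
Qed.

Lemma psd_hs_le_trace n (A Y : 'M[C]_n) : psd_op A ->
  hs_ip A Y <= RE (\tr A) * l1norm Y.
Proof. by move=> hA; apply: le_trans (ler_norm _) _; apply/hs_bound/psd_trace_bound. Qed.

Lemma hs_ip_self_eq0 n (X : 'M[C]_n) : herm_op X -> hs_ip X X = 0 -> X = 0.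
Proof.
move=> hX; rewrite hs_ip_herm // => h0.
have hge2 i k : 0 <= RE (X i k) * RE (X i k) + IM (X i k) * IM (X i k).
  by rewrite -!expr2 addr_ge0 ?sqr_ge0.
have hge i : 0 <= \sum_k (RE (X i k) * RE (X i k) + IM (X i k) * IM (X i k)).
  by apply: sumr_ge0 => k _.
have row0 := psumr_eq0P (fun i _ => hge i) h0.
apply/matrixP => i j.
have := psumr_eq0P (fun k _ => hge2 i k) (row0 i isT); move=> /(_ j isT); rewrite -!expr2 => e.
have e1 : RE (X i j) = 0.
  by apply/eqP; rewrite -sqrf_eq0 eq_le sqr_ge0 andbT -e lerDl sqr_ge0.
have e2 : IM (X i j) = 0.
  by apply/eqP; rewrite -sqrf_eq0 eq_le sqr_ge0 andbT -e lerDr sqr_ge0.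
by rewrite mxE -[X i j]ReIm_eta e1 e2.
Qed.

Lemma hs_ip_self_ge0 n (X : 'M[C]_n) : herm_op X -> 0 <= hs_ip X X.
Proof.
move=> hX; rewrite hs_ip_herm //; apply: sumr_ge0 => i _; apply: sumr_ge0 => j _.
by rewrite -!expr2 addr_ge0 ?sqr_ge0.
Qed.
End HilbertSchmidt.

(* Elements I (x) tau_T of S_G are Hermitian with entries bounded by
   Tr tau_T = N_{W_(T-1)} ... N_{W_1}: the normalisation Tr tau_1 = 1
   propagates through the chain Tr_{V_t} tau_t = I (x) tau_(t-1). *)
Section Testers.
Variable R : realType.
Local Notation C := R[i].
Local Notation RE := (@complex.Re R).
Local Notation IM := (@complex.Im R).

Lemma sum_tens (m n : nat) (F : 'I_(m * n) -> C) :
  \sum_x F x = \sum_(a < m) \sum_(b < n) F (mxtens_index (a, b)).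
Proof.
rewrite pair_bigA /= (reindex (@mxtens_index m n)) /=; last first.
  by exists (@mxtens_unindex m n) => x _; [exact: mxtens_indexK|exact: mxtens_unindexK].
by apply: eq_bigr => -[a b].
Qed.

Lemma tr_ptr1 m n (A : 'M[C]_(m * n)) : \tr (ptr1 A) = \tr A.
Proof. by rewrite /mxtrace sum_tens exchange_big /=; apply: eq_bigr => b _; rewrite mxE. Qed.

Lemma tens1E m n (B : 'M[C]_n) a1 b1 a2 b2 :
  ((1%:M : 'M[C]_m) *t B) (mxtens_index (a1, b1)) (mxtens_index (a2, b2)) =
  (a1 == a2)%:R * B b1 b2.
Proof. by rewrite tensmxE mxE. Qed.

Lemma tr_tens1 m n (B : 'M[C]_n) : \tr ((1%:M : 'M[C]_m) *t B) = m%:R * \tr B.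
Proof.
rewrite /mxtrace sum_tens.
under eq_bigr do under eq_bigr do rewrite tens1E eqxx mul1r.
by rewrite big_const_ord iter_addr_0 mulr_natl.
Qed.

Lemma herm_tens1 m n (B : 'M[C]_n) : herm_op B -> herm_op ((1%:M : 'M[C]_m) *t B).
Proof.
move=> hB; apply/matrixP => x y.
case: (mxtens_indexP x) => a1 b1; case: (mxtens_indexP y) => a2 b2.
rewrite adjmxE !tens1E conjcM (herm_entry b1 b2 hB) eq_sym.
by rewrite conjc_nat conjcK.
Qed.

(* The trace N_{W_t} ... N_{W_1} of the t-th level of a tester. *)
Fixpoint tester_trace (nW : nat -> nat) (t : nat) : R :=
  if t is s.+1 then (nW s.+1)%:R * tester_trace nW s else 1.

Lemma tester_trace_ge0 nW t : 0 <= tester_trace nW t.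
Proof. by elim: t => [|t IH] //=; rewrite mulr_ge0. Qed.

Lemma SG_herm_bounded (nV nW : nat -> nat) (Tp : nat) (X : 'M[C]_(dimPre nV nW Tp.+1)) :
  in_SG nV nW Tp X ->
  herm_op X /\ forall i j,
    `|RE (X i j)| <= tester_trace nW Tp /\ `|IM (X i j)| <= tester_trace nW Tp.
Proof.
move=> [tau [hpsd [htr0 [hrec ->]]]].
have htr t : (t <= Tp)%N -> \tr (tau t) = (tester_trace nW t)%:C.
  elim: t => [|t IH] ht; first by rewrite htr0.
  by rewrite -tr_ptr1 hrec // tr_tens1 IH ?(ltnW ht) //= rmorphM /= rmorph_nat.
have hT : psd_op (tau Tp) := hpsd Tp (leqnn _).
split; first by apply: herm_tens1; case: hT.
have hB := psd_trace_bound hT; rewrite htr // in hB.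
move=> x y; case: (mxtens_indexP x) => a1 b1; case: (mxtens_indexP y) => a2 b2.
rewrite tens1E; case: (a1 == a2); rewrite ?mul1r ?mul0r; first exact: hB.
by rewrite normr0 tester_trace_ge0.
Qed.
End Testers.
Arguments tester_trace {R} nW t.

Section ProjectionInequality.
Variable R : realType.

Lemma min_sqdist_variational (V : Type) (I : finType) (Q : set V)
    (comb : R -> V -> V -> V) (G : V -> I -> R) (y : I -> R) (zs : V) :
  (forall z, Q z -> forall s, 0 < s -> s <= 1 -> Q (comb s z zs)) ->
  (forall z s k, G (comb s z zs) k = s * G z k + (1 - s) * G zs k) ->
  (forall z, Q z -> \sum_k (G zs k - y k) ^+ 2 <= \sum_k (G z k - y k) ^+ 2) ->
  forall z, Q z -> 0 <= \sum_k (G z k - G zs k) * (G zs k - y k).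
Proof.
move=> hconv hlin hmin z hz.
set a := \sum_k _.
pose b := \sum_k (G z k - G zs k) ^+ 2.
have hb : 0 <= b by apply: sumr_ge0 => k _; exact: sqr_ge0.
(* moving from zs towards z by a step s changes the objective by s(2a + s b) *)
have step s : 0 < s -> s <= 1 -> 0 <= 2 * a + s * b.
  move=> s0 s1; have := hmin _ (hconv z hz s s0 s1).
  have -> : \sum_k (G (comb s z zs) k - y k) ^+ 2 =
            \sum_k (s * G z k + (1 - s) * G zs k - y k) ^+ 2.
    by apply: eq_bigr => k _; rewrite hlin.
  rewrite -subr_ge0 -sumrB.
  have -> : \sum_k ((s * G z k + (1 - s) * G zs k - y k) ^+ 2 - (G zs k - y k) ^+ 2)
      = s * (2 * a + s * b).
    rewrite /a /b mulr_sumr mulr_sumr -big_split mulr_sumr /=.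
    by apply: eq_bigr => k _; ring.
  by rewrite pmulr_rge0.
have h1 := step 1 ltr01 (lexx _).
rewrite leNgt; apply/negP => ha.
have bpos : 0 < b by lra.
have s0 : 0 < - a / b by rewrite divr_gt0 // oppr_gt0.
have s1 : - a / b <= 1 by rewrite ler_pdivrMr // mul1r; lra.
by have := step _ s0 s1; rewrite divfK ?gt_eqF //; lra.
Qed.

Lemma coercive_min_exists (n : nat) (Q : set 'rV[R]_n) (f : 'rV[R]_n -> R) z0 (B : R) :
  closed Q -> Q z0 -> continuous f -> 0 <= B ->
  (forall z, Q z -> f z <= f z0 -> forall k, `|z ord0 k| <= B) ->
  exists2 zs, Q zs & forall z, Q z -> f zs <= f z.
Proof.
move=> hQ hz0 hf hB hbd.
pose A := Q `&` [set z | f z <= f z0].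
have Acl : closed A.
  apply: closedI => //; apply: (preimage_closed (f := f) (D := [set x | x <= f z0])).
    by move=> x _; apply: hf.
  exact: closed_le.
have Abd : bounded_set A.
  exists B; split; first by rewrite num_real.
  move=> M hM z [hz hfz]; change (mx_norm z <= M); rewrite mx_normrE.
  apply: bigmax_le; first by rewrite ltW // (le_lt_trans hB).
  move=> [i k] _ /=; rewrite (ord1 i); apply: ltW; apply: le_lt_trans (hM).
  exact: hbd.
have A0 : A !=set0 by exists z0; split => //=.
have [c cA cmin] :=
  compact_EVT_min A0 (bounded_closed_compact Abd Acl) (continuous_subspaceT hf).
move: cA; rewrite inE => -[cQ cle]; exists c => // z hz.
have [hzle|hzgt] := leP (f z) (f z0); first by apply: cmin; rewrite inE.
exact: le_trans cle (ltW hzgt).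
Qed.
End ProjectionInequality.

Section ClosedSets.
Variable R : realType.
Variable T : topologicalType.

Lemma contB (f g : T -> R) :
  continuous f -> continuous g -> continuous (fun z => f z - g z).
Proof. by move=> hf hg z; exact: (continuousB (hf z) (hg z)). Qed.
Lemma contM (f g : T -> R) :
  continuous f -> continuous g -> continuous (fun z => f z * g z).
Proof. by move=> hf hg z; exact: (continuousM (hf z) (hg z)). Qed.
Lemma cont_sum (I : Type) (r : seq I) (F : I -> T -> R) :
  (forall i, continuous (F i)) -> continuous (fun z => \sum_(i <- r) F i z).
Proof. by move=> h; apply: continuous_big => //; exact: add_continuous. Qed.

Lemma closed_leq (f g : T -> R) :
  continuous f -> continuous g -> closed [set z | f z <= g z].
Proof.
move=> hf hg.
have -> : [set z | f z <= g z] = (fun z => g z - f z) @^-1` [set x | 0 <= x].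
  by apply/seteqP; split => z /=; rewrite subr_ge0.
by apply: preimage_closed; [move=> z _; apply: contB|exact: closed_ge].
Qed.

Lemma closed_forall (I : Type) (P : I -> set T) :
  (forall j, closed (P j)) -> closed [set z | forall j, P j z].
Proof.
move=> h; have -> : [set z | forall j, P j z] = \bigcap_(j in [set: I]) P j.
  by apply/seteqP; split => z /= hz j //; apply: hz.
by apply: closed_bigI => j _.
Qed.
End ClosedSets.

Section Coordinates.
Variable R : realType.
Variable I : finType.
Local Notation V := 'rV[R]_#|{: I}|.

Definition coord (z : V) (k : I) : R := z ord0 (enum_rank k).
Definition encode (f : I -> R) : V := \row_r f (enum_val r).

Lemma coord_encode f k : coord (encode f) k = f k.
Proof. by rewrite /coord /encode mxE enum_rankK. Qed.

Lemma coord_comb (s : R) (z1 z2 : V) k :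
  coord (s *: z1 + (1 - s) *: z2) k = s * coord z1 k + (1 - s) * coord z2 k.
Proof. by rewrite /coord !mxE. Qed.

Lemma coord_cont k : continuous (fun z : V => coord z k).
Proof. exact: coord_continuous. Qed.

Lemma coord_enum_val (z : V) (r : 'I_#|{: I}|) : z ord0 r = coord z (enum_val r).
Proof. by rewrite /coord enum_valK. Qed.

Lemma closed_coord_approx (P : set V) :
  (forall z, (forall e : R, 0 < e ->
      exists2 z', P z' & forall k, `|coord z k - coord z' k| < e) -> P z) ->
  closed P.
Proof.
move=> hP z hz; apply: hP => e e0.
have [z' [Pz' bz']] := hz _ (nbhsx_ballx z e e0).
exists z' => // k; move: bz'; rewrite mx_norm_ball /ball_ /= => h.
apply: le_lt_trans h; rewrite /coord.
change (`|z ord0 (enum_rank k) - z' ord0 (enum_rank k)| <= mx_norm (z - z')).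
rewrite mx_normrE; apply/bigmax_geP; right; exists (ord0, enum_rank k) => //=.
by rewrite !mxE.
Qed.
End Coordinates.

Section MatrixCoordinates.
Variable R : realType.
Local Notation C := R[i].
Local Notation RE := (@complex.Re R).
Local Notation IM := (@complex.Im R).
Variable N : nat.
Local Notation Mx := 'M[C]_N.
Local Notation Ent := ('I_N * 'I_N * bool)%type.

Definition epart (X : Mx) (k : Ent) : R :=
  if k.2 then IM (X k.1.1 k.1.2) else RE (X k.1.1 k.1.2).
Definition mx_of (f : Ent -> R) : Mx := \matrix_(i, j) (f (i, j, false) +i* f (i, j, true)).

Lemma epart_mx_of f k : epart (mx_of f) k = f k.
Proof. by case: k => [[i j] []]; rewrite /epart mxE. Qed.

Lemma mx_of_epart (X : Mx) : mx_of (epart X) = X.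
Proof. by apply/matrixP => i j; rewrite mxE /epart /= ReIm_eta. Qed.

Lemma epartB (X Y : Mx) k : epart (X - Y) k = epart X k - epart Y k.
Proof. by rewrite /epart !mxE; case: k.2; rewrite ?Re_sub // Im_add Im_opp. Qed.

Lemma epart_sum (I : Type) (r : seq I) (F : I -> Mx) k :
  epart (\sum_(i <- r) F i) k = \sum_(i <- r) epart (F i) k.
Proof. by rewrite /epart summxE; case: k.2; rewrite ?Re_sum ?Im_sum. Qed.

Lemma mx_of_comb (s : R) (f g : Ent -> R) :
  mx_of (fun k => s * f k + (1 - s) * g k) = s%:C *: mx_of f + (1 - s)%:C *: mx_of g.
Proof.
apply/matrixP => i j; rewrite !mxE.
by apply/eqP; rewrite eq_complex /= !mul0r !subr0 !addr0 !eqxx.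
Qed.

Lemma hs_ip_epart (X Y : Mx) : herm_op Y ->
  \sum_k epart X k * epart Y k = hs_ip X Y.
Proof.
move=> hY; rewrite hs_ip_herm //.
rewrite -(pair_bigA _ (fun ij bb => epart X (ij, bb) * epart Y (ij, bb))) /=.
rewrite (pair_bigA _ (fun i j => RE (X i j) * RE (Y i j) + IM (X i j) * IM (Y i j))) /=.
by apply: eq_bigr => -[i j] _; rewrite big_bool /= addrC.
Qed.

Lemma hs_ip_mx_of (f : Ent -> R) (A : Mx) : hs_ip (mx_of f) A =
  \sum_i \sum_k (f (i, k, false) * RE (A k i) - f (i, k, true) * IM (A k i)).
Proof. by rewrite hs_ipE; apply: eq_bigr => i _; apply: eq_bigr => k _; rewrite mxE. Qed.

Lemma mx_of_close (f g : Ent -> R) (e : R) : 0 < e ->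
  (forall k, `|f k - g k| < e / 2) -> forall i j, `|mx_of f i j - mx_of g i j| < e%:C.
Proof. by move=> e0 h i j; rewrite !mxE; apply: cnorm_lt => //=; rewrite h. Qed.
End MatrixCoordinates.

Section Separation.
Variable R : realType.
Local Notation C := R[i].
Local Notation RE := (@complex.Re R).
Local Notation IM := (@complex.Im R).
Variables (N M J : nat).
Local Notation Mx := 'M[C]_N.
Local Notation Tup := ('I_M -> Mx).
Local Notation Ent := ('I_N * 'I_N * bool)%type.
Variables (c : 'I_M -> Mx) (a : 'I_J -> 'I_M -> Mx) (b : 'I_J -> R).
Hypotheses (hc : forall m, herm_op (c m)) (ha : forall j m, herm_op (a j m)).
Variables (Cset : set Tup) (Sset : set Mx) (B : R).
Hypotheses (hCclosed : tup_closed Cset) (hCconv : tup_convex Cset)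
  (hCcone : tup_cone Cset) (hCpsd : forall Phi, Cset Phi -> forall m, psd_op (Phi m))
  (hSclosed : mx_closed Sset) (hSconv : mx_convex Sset)
  (hSherm : forall X, Sset X -> herm_op X) (hB : 0 <= B)
  (hSbound : forall X, Sset X -> forall i j, `|RE (X i j)| <= B /\ `|IM (X i j)| <= B).

Definition eta j (Phi : Tup) : R := \sum_(m < M) hs_ip (Phi m) (a j m) - b j.
Definition Pobj (Phi : Tup) : R := \sum_(m < M) hs_ip (Phi m) (c m).

Definition zfun (c' : 'I_M -> Mx) (q : 'I_J -> R) m := c' m - \sum_(j < J) (q j)%:C *: a j m.

Lemma zfun_herm c' q m : herm_op (c' m) -> herm_op (zfun c' q m).
Proof. by move=> h; apply: hermB => //; apply: herm_sum => j; apply: hermZ. Qed.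

Lemma lagrangian (c' : 'I_M -> Mx) (Phi : Tup) (chi : Mx) (q : 'I_J -> R) :
  \sum_m hs_ip (Phi m) (chi - zfun c' q m) =
  hs_ip (\sum_m Phi m) chi - \sum_m hs_ip (Phi m) (c' m)
  + \sum_j q j * \sum_m hs_ip (Phi m) (a j m).
Proof.
rewrite /zfun hs_ip_suml.
have -> : \sum_j q j * \sum_m hs_ip (Phi m) (a j m) =
          \sum_m \sum_j q j * hs_ip (Phi m) (a j m).
  by rewrite exchange_big /=; apply: eq_bigr => j _; rewrite mulr_sumr.
rewrite -sumrB -big_split /=; apply: eq_bigr => m _.
rewrite !hs_ipBr hs_ip_sumr.
have -> : \sum_j hs_ip (Phi m) ((q j)%:C *: a j m) = \sum_j q j * hs_ip (Phi m) (a j m).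
  by apply: eq_bigr => j _; rewrite hs_ipZr.
by ring.
Qed.

Lemma eta_sum j Phi : eta j Phi + b j = \sum_m hs_ip (Phi m) (a j m).
Proof. by rewrite /eta subrK. Qed.

(* Points (Phi, phi, w, t) are encoded as real vectors z indexed by IZ, and
   G z = (phi - sum Phi, w, t) is indexed by IY. *)
Definition IZ : finType := (((('I_M * Ent) + Ent) + 'I_J) + unit)%type.
Definition IY : finType := ((Ent + 'I_J) + unit)%type.
Local Notation Z := 'rV[R]_#|{: IZ}|.

Definition PhiZ (z : Z) : Tup := fun m => mx_of (fun k => coord z (inl (inl (inl (m, k))))).
Definition phiZ (z : Z) : Mx := mx_of (fun k => coord z (inl (inl (inr k)))).
Definition wZ (z : Z) (j : 'I_J) : R := coord z (inl (inr j)).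
Definition tZ (z : Z) : R := coord z (inr tt).
Definition gapZ (z : Z) : Mx := phiZ z - \sum_m PhiZ z m.

Definition encZ (Phi : Tup) (phi : Mx) (w : 'I_J -> R) (t : R) : Z :=
  encode (fun k : IZ => match k with
   | inl (inl (inl (m, e))) => epart (Phi m) e
   | inl (inl (inr e)) => epart phi e
   | inl (inr j) => w j
   | inr _ => t end).

Lemma PhiZ_enc Phi phi w t : PhiZ (encZ Phi phi w t) = Phi.
Proof.
apply: funext => m; rewrite /PhiZ -[RHS]mx_of_epart; congr mx_of.
by apply: funext => e; rewrite coord_encode.
Qed.
Lemma phiZ_enc Phi phi w t : phiZ (encZ Phi phi w t) = phi.
Proof.
rewrite /phiZ -[RHS]mx_of_epart; congr mx_of.
by apply: funext => e; rewrite coord_encode.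
Qed.
Lemma wZ_enc Phi phi w t : wZ (encZ Phi phi w t) = w.
Proof. by apply: funext => j; rewrite /wZ coord_encode. Qed.
Lemma tZ_enc Phi phi w t : tZ (encZ Phi phi w t) = t.
Proof. by rewrite /tZ coord_encode. Qed.

Definition G (z : Z) (k : IY) : R :=
  match k with
  | inl (inl e) => coord z (inl (inl (inr e))) - \sum_m coord z (inl (inl (inl (m, e))))
  | inl (inr j) => wZ z j
  | inr _ => tZ z
  end.

Lemma G_gap z e : G z (inl (inl e)) = epart (gapZ z) e.
Proof.
rewrite /= epartB epart_sum /phiZ epart_mx_of.
by congr (_ - _); apply: eq_bigr => m _; rewrite epart_mx_of.
Qed.

Definition target (v : R) (k : IY) : R := if k is inr _ then v else 0.
Definition dist2 (v : R) (z : Z) : R := \sum_k (G z k - target v k) ^+ 2.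

Definition Qset : set Z := [set z | Cset (PhiZ z) /\ Sset (phiZ z) /\
   (forall j, eta j (PhiZ z) <= wZ z j) /\ tZ z <= Pobj (PhiZ z)].

Lemma encQ Phi phi w t : Cset Phi -> Sset phi ->
  (forall j, eta j Phi <= w j) -> t <= Pobj Phi -> Qset (encZ Phi phi w t).
Proof. by rewrite /Qset /= PhiZ_enc phiZ_enc wZ_enc tZ_enc. Qed.

Lemma gap_herm z : Qset z -> herm_op (gapZ z).
Proof.
by case=> hC [hS _]; apply: hermB; [exact: hSherm|apply: herm_sum => m; case: (hCpsd hC m)].
Qed.

Lemma sumIY (F : IY -> R) :
  \sum_k F k = \sum_(e : Ent) F (inl (inl e)) + \sum_j F (inl (inr j)) + F (inr tt).
Proof. by rewrite !big_sumType /= (big_pred1 tt) // => -[]. Qed.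

Lemma dist2E v z : Qset z ->
  dist2 v z = hs_ip (gapZ z) (gapZ z) + \sum_j wZ z j ^+ 2 + (tZ z - v) ^+ 2.
Proof.
move=> hz; rewrite /dist2 sumIY -(hs_ip_epart _ (gap_herm hz)) /=.
congr (_ + _ + _).
  by apply: eq_bigr => e _; rewrite -G_gap subr0 expr2.
by apply: eq_bigr => j _; rewrite subr0.
Qed.

Lemma PhiZ_comb s (z1 z2 : Z) m :
  PhiZ (s *: z1 + (1 - s) *: z2) m = s%:C *: PhiZ z1 m + (1 - s)%:C *: PhiZ z2 m.
Proof. by rewrite /PhiZ -mx_of_comb; congr mx_of; apply: funext => e; rewrite coord_comb. Qed.
Lemma phiZ_comb s (z1 z2 : Z) :
  phiZ (s *: z1 + (1 - s) *: z2) = s%:C *: phiZ z1 + (1 - s)%:C *: phiZ z2.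
Proof. by rewrite /phiZ -mx_of_comb; congr mx_of; apply: funext => e; rewrite coord_comb. Qed.

Lemma hs_comb_sum (s : R) (X Y : Tup) (A : 'I_M -> Mx) :
  \sum_m hs_ip (s%:C *: X m + (1 - s)%:C *: Y m) (A m) =
  s * \sum_m hs_ip (X m) (A m) + (1 - s) * \sum_m hs_ip (Y m) (A m).
Proof. by rewrite !mulr_sumr -big_split; apply: eq_bigr => m _; rewrite hs_ipDl !hs_ipZl. Qed.

Lemma eta_comb s z1 z2 j : eta j (PhiZ (s *: z1 + (1 - s) *: z2)) =
  s * eta j (PhiZ z1) + (1 - s) * eta j (PhiZ z2).
Proof. by rewrite /eta; under eq_bigr do rewrite PhiZ_comb; rewrite hs_comb_sum; ring. Qed.
Lemma Pobj_comb s z1 z2 : Pobj (PhiZ (s *: z1 + (1 - s) *: z2)) =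
  s * Pobj (PhiZ z1) + (1 - s) * Pobj (PhiZ z2).
Proof. by rewrite /Pobj; under eq_bigr do rewrite PhiZ_comb; rewrite hs_comb_sum. Qed.

Lemma G_comb s z1 z2 k : G (s *: z1 + (1 - s) *: z2) k = s * G z1 k + (1 - s) * G z2 k.
Proof.
case: k => [[e|j]|u] /=; rewrite /wZ /tZ ?coord_comb //.
by under eq_bigr do rewrite coord_comb; rewrite big_split /= -!mulr_sumr; ring.
Qed.

Lemma Qset_conv z1 z2 s : Qset z1 -> Qset z2 -> 0 <= s -> s <= 1 ->
  Qset (s *: z1 + (1 - s) *: z2).
Proof.
move=> [C1 [S1 [E1 T1]]] [C2 [S2 [E2 T2]]] s0 s1.
have s0' : 0 <= 1 - s by rewrite subr_ge0.
split; [|split; [|split]].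
- rewrite (_ : PhiZ _ = fun m => s%:C *: PhiZ z1 m + (1 - s)%:C *: PhiZ z2 m).
    exact: hCconv.
  by apply: funext => m; rewrite PhiZ_comb.
- by rewrite phiZ_comb; apply: hSconv.
- move=> j; rewrite eta_comb /wZ coord_comb.
  by apply: lerD; apply: ler_wpM2l => //; rewrite -/(wZ _ j).
- by rewrite Pobj_comb /tZ coord_comb; apply: lerD; apply: ler_wpM2l.
Qed.

Lemma cont_hs m (A : Mx) : continuous (fun z : Z => hs_ip (PhiZ z m) A).
Proof.
rewrite /PhiZ; under [fun z => _]funext do rewrite hs_ip_mx_of.
apply: cont_sum => i; apply: cont_sum => k.
by apply: contB; apply: contM; try exact: coord_cont; exact: cst_continuous.
Qed.

Lemma cont_eta j : continuous (fun z : Z => eta j (PhiZ z)).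
Proof. by apply: contB; [apply: cont_sum => m; exact: cont_hs|exact: cst_continuous]. Qed.

Lemma cont_Pobj : continuous (fun z : Z => Pobj (PhiZ z)).
Proof. by apply: cont_sum => m; exact: cont_hs. Qed.

Lemma cont_dist2 v : continuous (dist2 v).
Proof.
have cG k : continuous (fun z : Z => G z k).
  case: k => [[e|j]|u] /=; try exact: coord_cont.
  by apply: contB; [exact: coord_cont|apply: cont_sum => m; exact: coord_cont].
apply: cont_sum => k; under [fun z => _]funext do rewrite expr2.
by apply: contM; apply: contB; [exact: cG|exact: cst_continuous|exact: cG|exact: cst_continuous].
Qed.

Lemma closed_Q : closed Qset.
Proof.
have closedC : closed [set z : Z | Cset (PhiZ z)].
  apply: closed_coord_approx => z hz; apply: hCclosed => e e0.
  have [z' hz' hc'] := hz (e / 2) (divr_gt0 e0 (ltr0Sn _ 1)).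
  by exists (PhiZ z') => // m; apply: mx_of_close.
have closedS : closed [set z : Z | Sset (phiZ z)].
  apply: closed_coord_approx => z hz; apply: hSclosed => e e0.
  have [z' hz' hc'] := hz (e / 2) (divr_gt0 e0 (ltr0Sn _ 1)).
  by exists (phiZ z') => //; apply: mx_of_close.
apply: closedI => //; apply: closedI => //; apply: closedI.
  by apply: closed_forall => j; apply: closed_leq; [exact: cont_eta|exact: coord_cont].
by apply: closed_leq; [exact: coord_cont|exact: cont_Pobj].
Qed.

(* Coercivity: on Qset, dist2 v z <= F bounds all coordinates of z, because
   phi ranges over the bounded set S and sum Phi is then close to phi. *)
Lemma Q_bound v z (F : R) : Qset z -> dist2 v z <= F ->
  forall k, `|coord z k| <= B + (1 + F) + `|v|.
Proof.
move=> hz hf; case: (hz) => [hC [hS _]].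
have hG k : `|G z k - target v k| <= 1 + F.
  have hsq : (G z k - target v k) ^+ 2 <= F.
    apply: le_trans hf; rewrite /dist2 (bigD1 k) //= lerDl.
    by apply: sumr_ge0 => l _; exact: sqr_ge0.
  move: hsq; set x := G z k - target v k => hsq.
  by have := sqr_ge0 x; rewrite ler_norml => x0; apply/andP; split; nra.
have F0 : 0 <= F by apply: le_trans hf; apply: sumr_ge0 => l _; exact: sqr_ge0.
have v0 := normr_ge0 v.
have B0 := hB.
have hphi e : `|coord z (inl (inl (inr e)))| <= B.
  rewrite (_ : coord _ _ = epart (phiZ z) e); last by rewrite epart_mx_of.
  by case: e => [[i j] []]; case: (hSbound hS i j); rewrite /epart.
case=> [[[[m e]|e]|j]|u].
- have hdiag i : RE ((\sum_m PhiZ z m) i i) <= B + (1 + F).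
    have := hG (inl (inl (i, i, false))).
    rewrite G_gap /gapZ epartB /epart /= subr0 => hD; have [hre _] := hSbound hS i i.
    by move: hD hre; rewrite !ler_norml => /andP[h1 h2] /andP[h3 h4]; lra.
  have hb := psd_tuple_bound (hCpsd hC) hdiag m.
  rewrite (_ : coord _ _ = epart (PhiZ z m) e); last by rewrite epart_mx_of.
  by case: e => [[i j] []]; case: (hb i j); rewrite /epart /=; lra.
- by have := hphi e; lra.
- have h : `|wZ z j - 0| <= 1 + F := hG (inl (inr j)).
  by rewrite /wZ subr0 in h; apply: le_trans h _; lra.
- have h : `|tZ z - v| <= 1 + F := hG (inr tt).
  have : `|tZ z| <= `|tZ z - v| + `|v| by apply: le_trans (ler_normD _ _); rewrite subrK.
  by case: u; rewrite /tZ; lra.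
Qed.

Lemma exists_projection v z0 : Qset z0 ->
  exists2 zs, Qset zs & forall z, Qset z -> dist2 v zs <= dist2 v z.
Proof.
move=> hz0; have F0 : 0 <= dist2 v z0 by apply: sumr_ge0 => l _; exact: sqr_ge0.
apply: (@coercive_min_exists _ _ Qset (dist2 v) z0 (B + (1 + dist2 v z0) + `|v|)).
- exact: closed_Q.
- exact: hz0.
- exact: cont_dist2.
- by rewrite !addr_ge0.
- by move=> z hz hf r; rewrite coord_enum_val; exact: Q_bound.
Qed.

(* First-order condition at the projection zs, written as a hyperplane
   (gap zs, w zs, v - t zs) below which all of Qset lies. *)
Lemma projection_inequality v zs :
  Qset zs -> (forall z, Qset z -> dist2 v zs <= dist2 v z) ->
  forall Phi phi w t, Cset Phi -> Sset phi -> (forall j, eta j Phi <= w j) -> t <= Pobj Phi ->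
  dist2 v zs - (v - tZ zs) * v <=
  hs_ip (phi - \sum_m Phi m) (gapZ zs) + \sum_j w j * wZ zs j - (v - tZ zs) * t.
Proof.
move=> hzs hmin Phi phi w t h1 h2 h3 h4.
have hvar := @min_sqdist_variational R _ _ Qset (fun s z zs => s *: z + (1 - s) *: zs)
  G (target v) zs (fun z hz s s0 s1 => Qset_conv hz hzs (ltW s0) s1)
  (fun z s k => G_comb s z zs k) hmin.
have := hvar _ (encQ h1 h2 h3 h4); rewrite sumIY (dist2E v hzs).
set z := encZ Phi phi w t.
have e1 : \sum_e (G z (inl (inl e)) - G zs (inl (inl e))) * (G zs (inl (inl e)) - 0) =
          hs_ip (phi - \sum_m Phi m) (gapZ zs) - hs_ip (gapZ zs) (gapZ zs).
  rewrite -!(hs_ip_epart _ (gap_herm hzs)) -sumrB; apply: eq_bigr => e _.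
  by rewrite !G_gap /gapZ /z PhiZ_enc phiZ_enc subr0; ring.
have e2 : \sum_j (G z (inl (inr j)) - G zs (inl (inr j))) * (G zs (inl (inr j)) - 0) =
          \sum_j w j * wZ zs j - \sum_j wZ zs j ^+ 2.
  by rewrite -sumrB; apply: eq_bigr => j _; rewrite /= /z wZ_enc subr0; ring.
have e3 : G z (inr tt) = t by rewrite /= /z tZ_enc.
rewrite e1 e2 e3 /=; nra.
Qed.

(* If v strictly exceeds the value of every feasible point, then (0, 0, v)
   is not in G(Qset): a zero distance would make the decoded tuple a
   feasible point of value >= v. *)
Lemma dist2_pos v z :
  (forall Phi, Cset Phi -> Sset (\sum_m Phi m) -> (forall j, eta j Phi <= 0) -> Pobj Phi < v) ->
  Qset z -> 0 < dist2 v z.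
Proof.
move=> hfeas hz; have hf := dist2E v hz; have hDD := hs_ip_self_ge0 (gap_herm hz).
have hW : 0 <= \sum_j wZ z j ^+ 2 by apply: sumr_ge0 => j _; exact: sqr_ge0.
have hT := sqr_ge0 (tZ z - v).
rewrite lt_neqAle; apply/andP; split; last by rewrite hf; lra.
apply/negP => /eqP /esym d0; case: hz => hC [hS [hE hTz]].
have gap0 : gapZ z = 0 by apply: hs_ip_self_eq0 (gap_herm _) _ => //; lra.
have tv : tZ z = v.
  by apply/eqP; rewrite -subr_eq0 -sqrf_eq0; apply/eqP; lra.
have W0 : \sum_j wZ z j ^+ 2 = 0 by apply/eqP; rewrite eq_le hW andbT; lra.
have hE0 j : eta j (PhiZ z) <= 0.
  have w0 := psumr_eq0P (fun i _ => sqr_ge0 (wZ z i)) W0.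
  by move: (w0 j isT) => /eqP; rewrite sqrf_eq0 => /eqP <-; exact: hE.
have hphi : phiZ z = \sum_m PhiZ z m by apply/eqP; rewrite -subr_eq0; apply/eqP.
have := hfeas _ hC; rewrite -hphi => /(_ hS hE0); lra.
Qed.

Lemma separating_hyperplane v :
  (exists Phi0, Cset Phi0 /\ Sset (\sum_m Phi0 m)) ->
  (forall Phi, Cset Phi -> Sset (\sum_m Phi m) -> (forall j, eta j Phi <= 0) -> Pobj Phi < v) ->
  exists (D : Mx) (w : 'I_J -> R) (beta delta : R),
    [/\ herm_op D, 0 < delta, 0 <= beta, (forall j, 0 <= w j) &
      forall Phi phi, Cset Phi -> Sset phi ->
        delta - beta * v <= hs_ip phi D - hs_ip (\sum_m Phi m) D
                            + \sum_j eta j Phi * w j - beta * Pobj Phi].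
Proof.
move=> [Phi0 [hC0 hS0]] hfeas.
have [zs hzs hmin] := exists_projection v (encQ hC0 hS0 (fun j => lexx _) (lexx _)).
have hsep := projection_inequality hzs hmin.
have hf := dist2E v hzs; have hD := gap_herm hzs.
case: (hzs) => hCs [hSs [hEs hTs]].
set D := gapZ zs in hf hsep hD; set ws := wZ zs in hf hsep hEs.
set ts := tZ zs in hf hsep hTs; set delta := dist2 v zs in hf hsep.
have hWW : \sum_j ws j * ws j = \sum_j ws j ^+ 2 by apply: eq_bigr => j _; rewrite expr2.
exists D, ws, (v - ts), delta; split => //.
- exact: dist2_pos.
- (* lowering t by 1 stays in Qset *)
  have := hsep _ _ ws (ts - 1) hCs hSs hEs; rewrite hWW hf => h.
  by have := h ltac:(move: hTs; rewrite /ts; lra); nra.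
- (* raising w_j by 1 stays in Qset *)
  move=> j; pose w l := ws l + (l == j)%:R.
  have hw l : eta l (PhiZ zs) <= w l by apply: le_trans (hEs l) _; rewrite lerDl ler0n.
  have := hsep _ _ w ts hCs hSs hw hTs.
  have -> : \sum_l w l * ws l = \sum_l ws l ^+ 2 + ws j.
    rewrite /w; under eq_bigr do rewrite mulrDl.
    rewrite big_split /= hWW; congr (_ + _); rewrite (bigD1 j) //= eqxx mul1r.
    by rewrite big1 ?addr0 // => l /negbTE ->; rewrite mul0r.
  by rewrite hf; nra.
- move=> Phi phi h1 h2.
  by have := hsep _ _ _ _ h1 h2 (fun j => lexx (eta j Phi)) (lexx _); rewrite hs_ipBl.
Qed.

Definition Dset := [set chq : Mx * ('I_J -> R) |
  herm_op chq.1 /\ (forall j, 0 <= chq.2 j) /\ dual_cone Cset (fun m => chq.1 - zfun c chq.2 m)].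
Definition DS (chq : Mx * ('I_J -> R)) : \bar R :=
  (support_fun Sset chq.1 + (\sum_(j < J) chq.2 j * b j)%:E)%E.

Lemma DS_le (chi : Mx) (q : 'I_J -> R) (v : R) :
  (forall phi, Sset phi -> hs_ip phi chi + \sum_j q j * b j <= v) -> (DS (chi, q) <= v%:E)%E.
Proof.
move=> h; have : (support_fun Sset chi <= (v - \sum_j q j * b j)%:E)%E.
  apply: ge_ereal_sup => x [phi hphi <-]; rewrite lee_fin.
  by have := h _ hphi; lra.
by move=> /(leeD2r (\sum_j q j * b j)%:E); rewrite -EFinD subrK.
Qed.

Lemma weak_duality Phi chq : Cset Phi -> Sset (\sum_m Phi m) ->
  (forall j, eta j Phi <= 0) -> Dset chq -> ((Pobj Phi)%:E <= DS chq)%E.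
Proof.
case: chq => chi q hC hS hE [_ [hq [_ hdc]]] /=.
have := hdc _ hC; rewrite lagrangian -/(Pobj Phi) => h0.
have hqe : \sum_j q j * (eta j Phi + b j) <= \sum_j q j * b j.
  rewrite -subr_ge0 -sumrB; apply: sumr_ge0 => j _.
  have h : q j * eta j Phi <= 0 := mulr_ge0_le0 (hq j) (hE j).
  by rewrite mulrDr; lra.
apply: (@le_trans _ _ (hs_ip (\sum_m Phi m) chi + \sum_j q j * b j)%:E).
  by rewrite lee_fin; move: hqe; under eq_bigr do rewrite eta_sum; lra.
by rewrite EFinD; apply: leeD2r; apply: ereal_sup_ubound; exists (\sum_m Phi m).
Qed.

(* Since C is a cone, a uniform lower bound K on the Lagrangian splits into
   dual feasibility of (chi, q) and the bound -K on its S-part. *)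
Lemma dual_certificate (c' : 'I_M -> Mx) (chi : Mx) (q : 'I_J -> R) (K : R) :
  (exists phi0, Sset phi0) -> (exists Phi0, Cset Phi0) ->
  (forall Phi phi, Cset Phi -> Sset phi ->
     K <= - hs_ip phi chi + \sum_m hs_ip (Phi m) (chi - zfun c' q m) - \sum_j q j * b j) ->
  (forall Phi, Cset Phi -> 0 <= \sum_m hs_ip (Phi m) (chi - zfun c' q m)) /\
  (forall phi, Sset phi -> hs_ip phi chi + \sum_j q j * b j <= - K).
Proof.
move=> [phi0 hphi0] [Phi0 hPhi0] h.
have scale Phi (k : R) : \sum_m hs_ip (k%:C *: Phi m) (chi - zfun c' q m) =
                         k * \sum_m hs_ip (Phi m) (chi - zfun c' q m).
  by rewrite mulr_sumr; apply: eq_bigr => m _; rewrite hs_ipZl.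
split=> [Phi hPhi|phi hphi].
  set g := \sum_m _; rewrite leNgt; apply/negP => hneg.
  pose L := K + hs_ip phi0 chi + \sum_j q j * b j.
  pose k := (`|L| + 1) / - g.
  have k0 : 0 < k by rewrite divr_gt0 ?oppr_gt0 // ltr_pwDr.
  have kg : k * g = - (`|L| + 1) by rewrite /k; field; exact: ltr0_neq0.
  have := h _ _ (hCcone hPhi (ltW k0)) hphi0; rewrite scale kg.
  by have := ler_norm (- L); rewrite normrN /L; lra.
by have := h _ _ (hCcone hPhi0 (lexx 0)) hphi; rewrite scale mul0r; lra.
Qed.

(* Case beta > 0: rescaling the hyperplane gives a dual point of value
   at most v - delta / beta. *)
Lemma dual_point_pos v (D : Mx) (w : 'I_J -> R) (beta delta : R) :
  (exists Phi0, Cset Phi0 /\ Sset (\sum_m Phi0 m)) ->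
  herm_op D -> 0 < delta -> 0 < beta -> (forall j, 0 <= w j) ->
  (forall Phi phi, Cset Phi -> Sset phi ->
     delta - beta * v <= hs_ip phi D - hs_ip (\sum_m Phi m) D
                         + \sum_j eta j Phi * w j - beta * Pobj Phi) ->
  exists2 chq, Dset chq & (DS chq <= v%:E)%E.
Proof.
move=> [Phi0 [hC0 hS0]] hD d0 b0 hw hsep; have bne := lt0r_neq0 b0.
pose chi := (- beta^-1)%:C *: D; pose q j := w j / beta.
have hlb Phi phi : Cset Phi -> Sset phi -> delta / beta - v <=
    - hs_ip phi chi + \sum_m hs_ip (Phi m) (chi - zfun c q m) - \sum_j q j * b j.
  move=> h1 h2; rewrite lagrangian -/(Pobj Phi) /chi !hs_ipZr.
  have eq1 : \sum_j q j * \sum_m hs_ip (Phi m) (a j m) - \sum_j q j * b j =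
             beta^-1 * \sum_j eta j Phi * w j.
    by rewrite -sumrB mulr_sumr; apply: eq_bigr => j _; rewrite -eta_sum /q; field.
  have ib : 0 <= beta^-1 by rewrite invr_ge0 ltW.
  have := ler_wpM2l ib (hsep _ _ h1 h2).
  have -> : beta^-1 * (delta - beta * v) = delta / beta - v by field.
  have -> : beta^-1 * (hs_ip phi D - hs_ip (\sum_m Phi m) D + \sum_j eta j Phi * w j
                       - beta * Pobj Phi) =
            beta^-1 * hs_ip phi D - beta^-1 * hs_ip (\sum_m Phi m) D
            + beta^-1 * \sum_j eta j Phi * w j - Pobj Phi by field.
  by move: eq1; lra.
have [hdual hval] := dual_certificate (ex_intro _ _ hS0) (ex_intro _ _ hC0) hlb.
exists (chi, q); first split => /=.
- exact: hermZ.
- split; first by move=> j; rewrite divr_ge0 // ltW.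
  by split=> // m; apply: hermB; [exact: hermZ|exact: zfun_herm].
- apply: DS_le => phi hphi; have := hval _ hphi.
  have : 0 < delta / beta by rewrite divr_gt0.
  lra.
Qed.

(* With lam = sum_m |c_m|_1, the operator lam I dominates every c_m on the
   PSD cone, so (lam I, 0) is dual feasible. *)
Lemma base_dual_feasible :
  Dset (((\sum_m l1norm (c m))%:C)%:M, fun=> 0).
Proof.
split; first exact: herm_scalar.
split=> //; split=> [m|Phi hPhi] /=; first by apply: hermB; [exact: herm_scalar|exact: zfun_herm].
have z0 m : zfun c (fun=> 0) m = c m by rewrite /zfun big1 ?subr0 // => j _; rewrite scale0r.
under eq_bigr do rewrite z0.
apply: sumr_ge0 => m _; rewrite hs_ipBr hs_ip_scalar subr_ge0 mulrC.
apply: le_trans (psd_hs_le_trace _ (hCpsd hPhi m)) _.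
apply: ler_wpM2l; first exact: psd_trace_ge0 (hCpsd hPhi m).
by rewrite (bigD1 m) //= lerDl; apply: sumr_ge0 => l _; exact: l1norm_ge0.
Qed.

Lemma dual_shift (chq : Mx * ('I_J -> R)) (chi' : Mx) (q' : 'I_J -> R) (s : R) :
  Dset chq -> herm_op chi' -> (forall j, 0 <= q' j) ->
  (forall Phi, Cset Phi -> 0 <= \sum_m hs_ip (Phi m) (chi' - zfun (fun=> 0) q' m)) ->
  0 <= s -> Dset (chq.1 + s%:C *: chi', fun j => chq.2 j + s * q' j).
Proof.
case: chq => chi q [hchi [hq [_ hdc]]] hchi' hq' hrec s0 /=.
have hsum : herm_op (chi + s%:C *: chi') by apply: hermD => //; exact: hermZ.
split=> //; split=> [j|]; first by rewrite addr_ge0 ?mulr_ge0.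
split=> [m|Phi hPhi]; first by apply: hermB => //; exact: zfun_herm.
have := hdc _ hPhi; have := mulr_ge0 s0 (hrec _ hPhi).
rewrite !lagrangian hs_ipDr hs_ipZr.
have -> : \sum_j (q j + s * q' j) * \sum_m hs_ip (Phi m) (a j m) =
          \sum_j q j * \sum_m hs_ip (Phi m) (a j m)
          + s * \sum_j q' j * \sum_m hs_ip (Phi m) (a j m).
  by rewrite mulr_sumr -big_split; apply: eq_bigr => j _; rewrite mulrDl mulrA.
have -> : \sum_m hs_ip (Phi m) ((fun=> 0) m) = 0 by apply: big1 => m _; exact: hs_ip0r.
by rewrite /= subr0 mulrDr; lra.
Qed.

(* Case beta = 0: the hyperplane is a recession direction of the dual along
   which D_S decreases at rate delta; moving from (lam I, 0) far enough along
   it reaches value v. *)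
Lemma dual_point_zero v (D : Mx) (w : 'I_J -> R) (delta : R) :
  (exists Phi0, Cset Phi0 /\ Sset (\sum_m Phi0 m)) ->
  herm_op D -> 0 < delta -> (forall j, 0 <= w j) ->
  (forall Phi phi, Cset Phi -> Sset phi ->
     delta <= hs_ip phi D - hs_ip (\sum_m Phi m) D + \sum_j eta j Phi * w j) ->
  exists2 chq, Dset chq & (DS chq <= v%:E)%E.
Proof.
move=> [Phi0 [hC0 hS0]] hD d0 hw hsep.
pose rec := (-1)%:C *: D.
have hlb Phi phi : Cset Phi -> Sset phi -> delta <=
    - hs_ip phi rec + \sum_m hs_ip (Phi m) (rec - zfun (fun=> 0) w m) - \sum_j w j * b j.
  move=> h1 h2; rewrite lagrangian /rec !hs_ipZr.
  rewrite (_ : \sum_m hs_ip (Phi m) 0 = 0); last by apply: big1 => m _; exact: hs_ip0r.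
  have eq1 : \sum_j w j * \sum_m hs_ip (Phi m) (a j m) - \sum_j w j * b j =
             \sum_j eta j Phi * w j.
    by rewrite -sumrB; apply: eq_bigr => j _; rewrite -eta_sum; ring.
  by have := hsep _ _ h1 h2; move: eq1; lra.
have [hrecC hrecS] := dual_certificate (ex_intro _ _ hS0) (ex_intro _ _ hC0) hlb.
pose base : Mx := ((\sum_m l1norm (c m))%:C)%:M; pose B0 := B * l1norm base; pose s := `|B0 - v| / delta.
have s0 : 0 <= s by rewrite divr_ge0 // ltW.
have hrec : herm_op rec by exact: hermZ.
exists (base + s%:C *: rec, fun j => 0 + s * w j).
  exact: (dual_shift base_dual_feasible hrec hw hrecC s0).
apply: DS_le => phi hphi; rewrite hs_ipDr hs_ipZr.
have -> : \sum_j (0 + s * w j) * b j = s * \sum_j w j * b j.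
  by rewrite mulr_sumr; apply: eq_bigr => j _; rewrite add0r mulrA.
have hB0 : hs_ip phi base <= B0.
  by apply: le_trans (ler_norm _) _; apply: hs_bound; exact: hSbound.
have := ler_wpM2l s0 (hrecS _ hphi); rewrite mulrDr mulrN.
have -> : s * delta = `|B0 - v| by rewrite /s divfK ?gt_eqF.
by have := ler_norm (B0 - v); lra.
Qed.

Lemma dual_value_le v :
  (exists Phi0, Cset Phi0 /\ Sset (\sum_m Phi0 m)) ->
  (forall Phi, Cset Phi -> Sset (\sum_m Phi m) -> (forall j, eta j Phi <= 0) -> Pobj Phi < v) ->
  (ereal_inf [set DS chq | chq in Dset] <= v%:E)%E.
Proof.
move=> hne hfeas.
have [D [w [beta [delta [hD d0 b0 hw hsep]]]]] := separating_hyperplane hne hfeas.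
have [chq hchq hval] : exists2 chq, Dset chq & (DS chq <= v%:E)%E.
  have [bpos|bz] : 0 < beta \/ beta = 0.
    by move: b0; rewrite le_eqVlt => /orP[/eqP <-|->]; [right|left].
    exact: (dual_point_pos hne hD d0 bpos hw hsep).
  apply: (@dual_point_zero v D w delta hne hD d0 hw) => Phi phi h1 h2.
  by have := hsep _ _ h1 h2; rewrite bz !mul0r !subr0.
by apply: le_trans hval; apply: ereal_inf_lbound; exists chq.
Qed.

Lemma in_closure (A : set Tup) Phi : A Phi -> tup_closure A Phi.
Proof. by move=> h e e0; exists Phi => // m i j; rewrite subrr normr0 ltcR. Qed.

(* P is continuous: an upper bound of P on a set of tuples bounds it on the closure. *)
Lemma Pobj_closure_le (A : set Tup) (u : R) Phi :
  tup_closure A Phi -> (forall Psi, A Psi -> Pobj Psi <= u) -> Pobj Phi <= u.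
Proof.
move=> hcl hub; apply/ler_addgt0Pr => e e0.
pose lam := \sum_m l1norm (c m).
have lam0 : 0 <= lam by apply: sumr_ge0 => m _; exact: l1norm_ge0.
have e1 : 0 < e / (lam + 1) by rewrite divr_gt0 // ltr_wpDl.
have [Psi hPsi hclose] := hcl _ e1.
have hd : Pobj Phi - Pobj Psi <= e / (lam + 1) * lam.
  rewrite /Pobj -sumrB mulr_sumr; apply: ler_sum => m _.
  rewrite -hs_ipBl; apply: le_trans (ler_norm _) _; apply: hs_bound => i k.
  have [h1 h2] := cnorm_lt_inv (hclose m i k).
  by rewrite !mxE; split; apply: ltW.
have : e / (lam + 1) * lam <= e.
  rewrite mulrAC ler_pdivrMr ?ltr_wpDl //; apply: ler_wpM2l; [exact: ltW|lra].
by have := hub _ hPsi; lra.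
Qed.

(* inf D <= sup_P P whenever every feasible point of the closed problem is a
   limit of points of P: each level v above sup_P P is above every closed
   feasible value, hence bounds the dual value. *)
Lemma dual_le_primal (Pset : set Tup) :
  (exists Phi0, Cset Phi0 /\ Sset (\sum_m Phi0 m)) ->
  (forall Phi, Cset Phi -> Sset (\sum_m Phi m) -> (forall j, eta j Phi <= 0) ->
     tup_closure Pset Phi) ->
  (ereal_inf [set DS chq | chq in Dset] <= ereal_sup [set (Pobj Phi)%:E | Phi in Pset])%E.
Proof.
move=> hne hcl; set sp := ereal_sup _.
have hub Psi : Pset Psi -> ((Pobj Psi)%:E <= sp)%E.
  by move=> h; apply: ereal_sup_ubound; exists Psi.
have feas_le u : (forall Psi, Pset Psi -> Pobj Psi <= u) ->
    forall Phi, Cset Phi -> Sset (\sum_m Phi m) -> (forall j, eta j Phi <= 0) -> Pobj Phi <= u.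
  by move=> hu Phi h1 h2 h3; apply: Pobj_closure_le (hcl _ h1 h2 h3) hu.
clearbody sp; case: sp hub => [r| |] hub.
- apply/lee_addgt0Pr => e e0; rewrite -EFinD; apply: dual_value_le => // Phi h1 h2 h3.
  apply: le_lt_trans (feas_le r _ _ h1 h2 h3) _; last by rewrite ltrDl.
  by move=> Psi /hub; rewrite lee_fin.
- by rewrite leey.
- (* P is empty, so every v is a strict bound and the dual value is -oo *)
  have hv v : (ereal_inf [set DS chq | chq in Dset] <= v%:E)%E.
    apply: dual_value_le => // Phi h1 h2 h3.
    by have [Psi /hub] := hcl _ h1 h2 h3 1 ltr01.
  case E : (ereal_inf _) => [r'| |] //.
    by have := hv (r' - 1); rewrite E lee_fin lerBrDr gerDl ler10.
  by have := hv 0; rewrite E.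
Qed.

Lemma strong_duality (Tset : set Tup) :
  Tset !=set0 -> tup_closure Tset = [set Phi | Cset Phi /\ Sset (\sum_m Phi m)] ->
  let Pset := [set Phi | Tset Phi /\ forall j, eta j Phi <= 0] in
  tup_closure Pset = [set Phi | tup_closure Tset Phi /\ forall j, eta j Phi <= 0] ->
  ereal_sup [set (Pobj Phi)%:E | Phi in Pset] = ereal_inf [set DS chq | chq in Dset].
Proof.
move=> [Phi0 hT0] hTbar Pset hPcl.
have T_CS Phi : Tset Phi -> Cset Phi /\ Sset (\sum_m Phi m).
  by move=> h; have := in_closure h; rewrite hTbar.
apply/eqP; rewrite eq_le; apply/andP; split.
  apply: ge_ereal_sup => x [Phi [hT hE] <-]; apply: le_ereal_inf_tmp => y [chq hchq <-].
  by have [hC hS] := T_CS _ hT; exact: weak_duality.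
apply: dual_le_primal; first by exists Phi0; exact: T_CS.
by move=> Phi h1 h2 h3; rewrite hPcl hTbar.
Qed.
End Separation.

Unset Implicit Arguments.

(* T = Tp.+1 >= 1 ; nV t, nW t = dimensions of V_t, W_t (t = 1..T);
   the full space V~ has dimension dimPre nV nW Tp.+1. *)
Theorem theorem1 (R : realType) (Tp : nat) (nV nW : nat -> nat)
  (M : nat) (hM : (2 <= M)%N) (J : nat)
  (c : 'I_M -> 'M[R[i]]_(dimPre nV nW Tp.+1))
  (a : 'I_J -> 'I_M -> 'M[R[i]]_(dimPre nV nW Tp.+1))
  (b : 'I_J -> R)
  (hc : forall m, herm_op (c m))
  (ha : forall j m, herm_op (a j m))
  (Tset : set ('I_M -> 'M[R[i]]_(dimPre nV nW Tp.+1)))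
  (hT0 : Tset !=set0)
  (hTconv : tup_convex Tset)
  (hTsub : forall Phi, Tset Phi -> in_TG nV nW Tp M Phi)
  (Cset : set ('I_M -> 'M[R[i]]_(dimPre nV nW Tp.+1)))
  (Sset : set 'M[R[i]]_(dimPre nV nW Tp.+1))
  (hCclosed : tup_closed Cset) (hCconv : tup_convex Cset) (hCcone : tup_cone Cset)
  (hCsub : forall Phi, Cset Phi -> in_CG Phi)
  (hSclosed : mx_closed Sset) (hSconv : mx_convex Sset)
  (hSsub : forall X, Sset X -> in_SG nV nW Tp X)
  (hTbar : tup_closure Tset = [set Phi | Cset Phi /\ Sset (\sum_(m < M) Phi m)]) :
  let eta j (Phi : 'I_M -> 'M[R[i]]_(dimPre nV nW Tp.+1)) : R :=
    \sum_(m < M) hs_ip (Phi m) (a j m) - b j in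
  let Pobj (Phi : 'I_M -> 'M[R[i]]_(dimPre nV nW Tp.+1)) : R :=
    \sum_(m < M) hs_ip (Phi m) (c m) in
  let Pset := [set Phi | Tset Phi /\ forall j, eta j Phi <= 0] in
  let z (q : 'I_J -> R) m := c m - \sum_(j < J) (q j)%:C *: a j m in
  let Dset := [set chq : 'M[R[i]]_(dimPre nV nW Tp.+1) * ('I_J -> R) |
                 herm_op chq.1 /\ (forall j, 0 <= chq.2 j) /\
                 dual_cone Cset (fun m => chq.1 - z chq.2 m)] in
  let DS (chq : 'M[R[i]]_(dimPre nV nW Tp.+1) * ('I_J -> R)) : \bar R :=
    (support_fun Sset chq.1 + (\sum_(j < J) chq.2 j * b j)%:E)%E in
  tup_closure Pset = [set Phi | tup_closure Tset Phi /\ forall j, eta j Phi <= 0] ->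
  ereal_sup [set (Pobj Phi)%:E | Phi in Pset] = ereal_inf [set DS chq | chq in Dset].
Proof.
move=> eta Pobj Pset z Dset DS hPcl.
have hSG X (hX : Sset X) := SG_herm_bounded (hSsub X hX).
exact: (strong_duality hc ha hCclosed hCconv hCcone hCsub hSclosed hSconv
  (fun X hX => (hSG X hX).1) (@tester_trace_ge0 R nW Tp) (fun X hX => (hSG X hX).2)
  hT0 hTbar hPcl).
Qed.
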